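(* Let $R$ be an arbitrary unital associative ring and let $$ A=\left(\begin{array}{ccc} 1&1&1\\ 1&a&b\\ 1&c&d \end{array}\right)\in M_3(R) \quad \text{and}\quad B=\left(\begin{array}{cc} a-1&b-1\\ c-1&d-1 \end{array}\right)\in M_2(R). $$ Then $A$ is invertible if and only if $B$ is invertible. Moreover, if $B$ is invertible and $$ B^{-1}=\left(\begin{array}{cc} s&t\\ u&v \end{array}\right), $$ then the inverse of $A$ is given by the formula $$ A^{-1}=\left(\begin{array}{ccc} 1+s+t+u+v&-s-u&-t-v\\ -s-t&s&t\\ -u-v&u&v \end{array}\right). $$ Furthermore, if $a-1$, $b-1$, $c-1$ and $d-1$ are invertible, then $s$, $t$, $u$ and $v$ are given by $$ \begin{array}{ll} s=((a-1)-(b-1)(d-1)^{-1}(c-1))^{-1},&\ \ \ t=((c-1)-(d-1)(b-1)^{-1}(a-1))^{-1}, \\ u=((b-1)-(a-1)(c-1)^{-1}(d-1))^{-1},&\ \ \ v=((d-1)-(c-1)(a-1)^{-1}(b-1))^{-1} \end{array} $$ (thus providing an explicit expression of $A^{-1}$ in terms of $a$, $b$, $c$ and $d$).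
   Context: $R$ is an arbitrary unital associative ring, $M_n(R)$ denotes $n\times n$ matrices over $R$. The matrix $A$ is a $3\times 3$ matrix whose first row and first column consist of $1$'s (i.e. $A$ lies in the set of $3\times 3$ matrices with all entries of the first row and first column equal to $1$). *)

From HB Require Import structures.
From mathcomp Require Import all_boot all_order all_algebra.
Set Implicit Arguments. Unset Strict Implicit. Unset Printing Implicit Defensive.
Import GRing.Theory.
Local Open Scope ring_scope.

Definition el_inverse (R : pzRingType) (x y : R) : Prop := x * y = 1 /\ y * x = 1.

Definition mx_inverse (R : pzRingType) (n : nat) (X Y : 'M[R]_n) : Prop :=
  X *m Y = 1%:M /\ Y *m X = 1%:M.

Definition mx_invertible (R : pzRingType) (n : nat) (X : 'M[R]_n) : Prop :=
  exists Y, mx_inverse X Y.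

Definition mx3 (R : pzRingType) (x11 x12 x13 x21 x22 x23 x31 x32 x33 : R) : 'M[R]_3 :=
  \matrix_(i < 3, j < 3)
    nth 0 (nth [::] [:: [:: x11; x12; x13]; [:: x21; x22; x23]; [:: x31; x32; x33]] i) j.

Definition mx2 (R : pzRingType) (x11 x12 x21 x22 : R) : 'M[R]_2 :=
  \matrix_(i < 2, j < 2) nth 0 (nth [::] [:: [:: x11; x12]; [:: x21; x22]] i) j.

From HB Require Import structures.
From mathcomp Require Import all_boot all_order all_algebra.
Import GRing.Theory.
Local Open Scope ring_scope.

(* A = L * diag(1, B) * U, where L and U are the shears adding the first row
   (resp. column) to the others; so A and diag(1, B) are invertible together,
   and A^-1 = U^-1 * diag(1, B^-1) * L^-1 is the displayed matrix.  Each entry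
   of B^-1 is the inverse of a Schur complement of a corner of B: e.g. from
   (c-1) s + (d-1) u = 0 we get (c-1) s = -(d-1) u, whence
   ((a-1) - (b-1)(d-1)^-1(c-1)) s = (a-1) s + (b-1) u = 1; the other corners
   follow by permuting the rows and columns of B. *)

Section Matrices.
Context {R : pzRingType}.
Implicit Types x y z w s t u v p q : R.

Lemma mulmx_mx3 (x11 x12 x13 x21 x22 x23 x31 x32 x33
                 y11 y12 y13 y21 y22 y23 y31 y32 y33 : R) :
  mx3 x11 x12 x13 x21 x22 x23 x31 x32 x33 *m mx3 y11 y12 y13 y21 y22 y23 y31 y32 y33 =
  mx3 (x11 * y11 + x12 * y21 + x13 * y31) (x11 * y12 + x12 * y22 + x13 * y32)
      (x11 * y13 + x12 * y23 + x13 * y33)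
      (x21 * y11 + x22 * y21 + x23 * y31) (x21 * y12 + x22 * y22 + x23 * y32)
      (x21 * y13 + x22 * y23 + x23 * y33)
      (x31 * y11 + x32 * y21 + x33 * y31) (x31 * y12 + x32 * y22 + x33 * y32)
      (x31 * y13 + x32 * y23 + x33 * y33).
Proof.
apply/matrixP=> i j; rewrite /mx3 !mxE !big_ord_recr big_ord0 /= add0r !mxE /=.
by case: i j => [[|[|[|?]]] ?] [[|[|[|?]]] ?].
Qed.

Lemma mulmx_mx2 x11 x12 x21 x22 y11 y12 y21 y22 :
  mx2 x11 x12 x21 x22 *m mx2 y11 y12 y21 y22 =
  mx2 (x11 * y11 + x12 * y21) (x11 * y12 + x12 * y22)
      (x21 * y11 + x22 * y21) (x21 * y12 + x22 * y22).
Proof.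
apply/matrixP=> i j; rewrite /mx2 !mxE !big_ord_recr big_ord0 /= add0r !mxE /=.
by case: i j => [[|[|?]] ?] [[|[|?]] ?].
Qed.

Lemma mx3_1 : mx3 1 0 0 0 1 0 0 0 1 = 1%:M :> 'M[R]_3.
Proof.
by apply/matrixP=> i j; rewrite /mx3 !mxE; case: i j => [[|[|[|?]]] ?] [[|[|[|?]]] ?].
Qed.

Lemma mx2_1 : mx2 1 0 0 1 = 1%:M :> 'M[R]_2.
Proof.
by apply/matrixP=> i j; rewrite /mx2 !mxE; case: i j => [[|[|?]] ?] [[|[|?]] ?].
Qed.

Lemma mx3E (X : 'M[R]_3) :
  let e i j := X (inord i) (inord j) in
  X = mx3 (e 0 0)%N (e 0 1)%N (e 0 2)%N (e 1 0)%N (e 1 1)%N (e 1 2)%N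
          (e 2 0)%N (e 2 1)%N (e 2 2)%N.
Proof.
apply/matrixP=> i j; rewrite /mx3 !mxE.
by case: i j => [[|[|[|?]]] ?] [[|[|[|?]]] ?] //=; congr (X _ _); apply: val_inj;
  rewrite /= inordK.
Qed.

Lemma mx2E (X : 'M[R]_2) :
  let e i j := X (inord i) (inord j) in X = mx2 (e 0 0) (e 0 1) (e 1 0) (e 1 1).
Proof.
apply/matrixP=> i j; rewrite /mx2 !mxE.
by case: i j => [[|[|?]] ?] [[|[|?]] ?] //=; congr (X _ _); apply: val_inj;
  rewrite /= inordK.
Qed.

Lemma mx3_inj (x11 x12 x13 x21 x22 x23 x31 x32 x33
               y11 y12 y13 y21 y22 y23 y31 y32 y33 : R) :
  mx3 x11 x12 x13 x21 x22 x23 x31 x32 x33 = mx3 y11 y12 y13 y21 y22 y23 y31 y32 y33 ->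
  [/\ [/\ x11 = y11, x12 = y12 & x13 = y13], [/\ x21 = y21, x22 = y22 & x23 = y23]
    & [/\ x31 = y31, x32 = y32 & x33 = y33]].
Proof.
move=> eqX; have e i j := congr1 (fun X : 'M[R]_3 => X (inord i) (inord j)) eqX.
move: (e 0 0)%N (e 0 1)%N (e 0 2)%N (e 1 0)%N (e 1 1)%N (e 1 2)%N
  (e 2 0)%N (e 2 1)%N (e 2 2)%N.
by rewrite /mx3 !mxE !inordK.
Qed.

Lemma mx2_inj x11 x12 x21 x22 y11 y12 y21 y22 :
  mx2 x11 x12 x21 x22 = mx2 y11 y12 y21 y22 ->
  [/\ x11 = y11, x12 = y12, x21 = y21 & x22 = y22].
Proof.
move=> eqX; have e i j := congr1 (fun X : 'M[R]_2 => X (inord i) (inord j)) eqX.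
by move: (e 0 0)%N (e 0 1)%N (e 1 0)%N (e 1 1)%N; rewrite /mx2 !mxE !inordK.
Qed.

Lemma mx2_inverseE x y z w s t u v :
  mx_inverse (mx2 x y z w) (mx2 s t u v) <->
  [/\ x * s + y * u = 1, x * t + y * v = 0, z * s + w * u = 0 & z * t + w * v = 1] /\
  [/\ s * x + t * z = 1, s * y + t * w = 0, u * x + v * z = 0 & u * y + v * w = 1].
Proof.
rewrite /mx_inverse !mulmx_mx2 -mx2_1; split.
  by case=> /mx2_inj[? ? ? ?] /mx2_inj[? ? ? ?].
by case=> -[-> -> -> ->] [-> -> -> ->].
Qed.

Lemma mx_inverse_sym {n} {X Y : 'M[R]_n} : mx_inverse X Y -> mx_inverse Y X.
Proof. by case. Qed.

Lemma mx_inverse_mul {n} {X X' Y Y' : 'M[R]_n} :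
  mx_inverse X X' -> mx_inverse Y Y' -> mx_inverse (X *m Y) (Y' *m X').
Proof.
move=> [XX' X'X] [YY' Y'Y]; split.
  by rewrite mulmxA -(mulmxA X) YY' mulmx1 XX'.
by rewrite mulmxA -(mulmxA Y') X'X mulmx1 Y'Y.
Qed.

Lemma mx_invertible_mulLR {n} {P P' Q Q' X : 'M[R]_n} :
  mx_inverse P P' -> mx_inverse Q Q' ->
  mx_invertible (P *m X *m Q) <-> mx_invertible X.
Proof.
move=> invP invQ; split=> -[Y invY].
  have -> : X = P' *m (P *m X *m Q) *m Q'.
    by rewrite !mulmxA invP.2 mul1mx -mulmxA invQ.1 mulmx1.
  exists (Q *m (Y *m P)).
  exact: mx_inverse_mul (mx_inverse_mul (mx_inverse_sym invP) invY) (mx_inverse_sym invQ).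
by exists (Q' *m (Y *m P')); exact: mx_inverse_mul (mx_inverse_mul invP invY) invQ.
Qed.

Lemma mx2_inverse_swap_rows {x y z w s t u v} :
  mx_inverse (mx2 x y z w) (mx2 s t u v) -> mx_inverse (mx2 z w x y) (mx2 t s v u).
Proof.
move/mx2_inverseE=> -[[? ? ? ?] [? ? ? ?]].
by apply/mx2_inverseE; split; split; rewrite // addrC.
Qed.

Lemma mx2_inverse_swap_cols {x y z w s t u v} :
  mx_inverse (mx2 x y z w) (mx2 s t u v) -> mx_inverse (mx2 y x w z) (mx2 u v s t).
Proof. by move/mx_inverse_sym/mx2_inverse_swap_rows/mx_inverse_sym. Qed.

Lemma mx2_inverse_schur {x y z w s t u v w'} :
  mx_inverse (mx2 x y z w) (mx2 s t u v) -> el_inverse w w' ->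
  el_inverse (x - y * w' * z) s.
Proof.
move/mx2_inverseE=> -[[xs_yu _ zs_wu _] [sx_tz sy_tw _ _]] [ww' w'w].
have zsE : z * s = - (w * u) by apply/eqP; rewrite -addr_eq0 zs_wu.
have syE : s * y = - (t * w) by apply/eqP; rewrite -addr_eq0 sy_tw.
split.
  by rewrite mulrBl -(mulrA (y * w')) zsE mulrN opprK mulrA -(mulrA y) w'w mulr1.
by rewrite mulrBr !mulrA syE !mulNr opprK -(mulrA t) ww' mulr1.
Qed.

Lemma mx_inverse_col_shear p q :
  mx_inverse (mx3 1 0 0 p 1 0 q 0 1) (mx3 1 0 0 (- p) 1 0 (- q) 0 1).
Proof.
rewrite /mx_inverse !mulmx_mx3 -mx3_1.
by split; congr mx3; rewrite !(mul0r, mulr0, mul1r, mulr1, add0r, addr0) ?addrN ?addNr.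
Qed.

Lemma mx_inverse_row_shear p q :
  mx_inverse (mx3 1 p q 0 1 0 0 0 1) (mx3 1 (- p) (- q) 0 1 0 0 0 1).
Proof.
rewrite /mx_inverse !mulmx_mx3 -mx3_1.
by split; congr mx3; rewrite !(mul0r, mulr0, mul1r, mulr1, add0r, addr0) ?addrN ?addNr.
Qed.

Lemma mx_inverse_diag1 x y z w s t u v :
  mx_inverse (mx2 x y z w) (mx2 s t u v) ->
  mx_inverse (mx3 1 0 0 0 x y 0 z w) (mx3 1 0 0 0 s t 0 u v).
Proof.
move/mx2_inverseE=> -[[xs_yu xt_yv zs_wu zt_wv] [sx_tz sy_tw ux_vz uy_vw]].
by rewrite /mx_inverse !mulmx_mx3 -mx3_1 !(mul0r, mulr0, mul1r, mulr1, add0r, addr0)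
  xs_yu xt_yv zs_wu zt_wv sx_tz sy_tw ux_vz uy_vw.
Qed.

Lemma mx_invertible_diag1 x y z w :
  mx_invertible (mx3 1 0 0 0 x y 0 z w) <-> mx_invertible (mx2 x y z w).
Proof.
split=> -[Y]; last by rewrite (mx2E Y) => /mx_inverse_diag1; eexists; eassumption.
rewrite (mx3E Y) /mx_inverse !mulmx_mx3 -mx3_1.
case=> /mx3_inj[_ [_ e11 e12] [_ e21 e22]] /mx3_inj[_ [_ f11 f12] [_ f21 f22]].
rewrite !(mul0r, add0r) in e11 e12 e21 e22; rewrite !(mulr0, add0r) in f11 f12 f21 f22.
by eexists; apply/mx2_inverseE; split; split; eassumption.
Qed.

Variables a b c d : R.

Lemma mx3_ones_factor :
  mx3 1 1 1 1 a b 1 c d =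
  mx3 1 0 0 1 1 0 1 0 1 *m mx3 1 0 0 0 (a - 1) (b - 1) 0 (c - 1) (d - 1)
    *m mx3 1 1 1 0 1 0 0 0 1.
Proof.
by rewrite !mulmx_mx3; congr mx3;
  rewrite !(mul0r, mulr0, mul1r, mulr1, add0r, addr0) ?subrKC.
Qed.

Lemma mx3_ones_invertible :
  mx_invertible (mx3 1 1 1 1 a b 1 c d) <->
  mx_invertible (mx2 (a - 1) (b - 1) (c - 1) (d - 1)).
Proof.
rewrite mx3_ones_factor; apply: iff_trans (mx_invertible_diag1 _ _ _ _).
exact: mx_invertible_mulLR (mx_inverse_col_shear _ _) (mx_inverse_row_shear _ _).
Qed.

Lemma mx3_ones_inverse s t u v :
  mx_inverse (mx2 (a - 1) (b - 1) (c - 1) (d - 1)) (mx2 s t u v) ->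
  mx_inverse (mx3 1 1 1 1 a b 1 c d)
    (mx3 (1 + s + t + u + v) (- s - u) (- t - v) (- s - t) s t (- u - v) u v).
Proof.
move/mx_inverse_diag1 => invM; rewrite mx3_ones_factor.
have := mx_inverse_mul (mx_inverse_mul (mx_inverse_col_shear 1 1) invM)
  (mx_inverse_row_shear 1 1).
congr mx_inverse; rewrite !mulmx_mx3; congr mx3;
  by rewrite !(mul0r, mulr0, mul1r, mulr1, mulN1r, mulrN1, add0r, addr0)
    ?opprD ?opprK ?addrA.
Qed.

End Matrices.

Theorem lemma5 (R : pzRingType) (a b c d : R) :
  let A := mx3 1 1 1 1 a b 1 c d in
  let B := mx2 (a - 1) (b - 1) (c - 1) (d - 1) in
  (mx_invertible A <-> mx_invertible B) /\
  (forall s t u v : R, mx_inverse B (mx2 s t u v) ->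
     mx_inverse A (mx3 (1 + s + t + u + v) (- s - u) (- t - v)
                       (- s - t)           s         t
                       (- u - v)           u         v)) /\
  (forall s t u v : R, mx_inverse B (mx2 s t u v) ->
   forall ia ib ic id : R,
     el_inverse (a - 1) ia -> el_inverse (b - 1) ib ->
     el_inverse (c - 1) ic -> el_inverse (d - 1) id ->
     [/\ el_inverse ((a - 1) - (b - 1) * id * (c - 1)) s,
         el_inverse ((c - 1) - (d - 1) * ib * (a - 1)) t,
         el_inverse ((b - 1) - (a - 1) * ic * (d - 1)) u &
         el_inverse ((d - 1) - (c - 1) * ia * (b - 1)) v]).
Proof.
rewrite /=; split; first exact: mx3_ones_invertible.
split=> [|s t u v invB ia ib ic id inv_a inv_b inv_c inv_d]; first exact: mx3_ones_inverse.
split.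
- exact: mx2_inverse_schur invB inv_d.
- exact: mx2_inverse_schur (mx2_inverse_swap_rows invB) inv_b.
- exact: mx2_inverse_schur (mx2_inverse_swap_cols invB) inv_c.
- exact: mx2_inverse_schur (mx2_inverse_swap_cols (mx2_inverse_swap_rows invB)) inv_a.
Qed.
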